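(* Let $G=(V,E)$ be a simple undirected graph, let $E^2=\{\{u,v\}\in\binom{V}{2}:\operatorname{dist}_G(u,v)\le 2\}$, and let $(\hat x,\hat y)$ with $\hat x\in\mathbb{Z}_+^{E^2}$ and $\hat y\in\{0,1\}^V$ be an integer point satisfying $$\frac{\sum_{i\in N_G(u)\cap N_G(v)}(1-\hat y_i)}{|N_G(u)\cap N_G(v)|}-\hat y_u-\hat y_v\le \hat x_{uv}\quad\text{for all }\{u,v\}\in E^2\setminus E.$$ Then $1-\hat y_u-\hat y_v-\hat y_i\le \hat x_{uv}$ for all $\{u,v\}\in E^2\setminus E$ and all $i\in N_G(u)\cap N_G(v)$.
   Context: $N_G(v)$ denotes the set of neighbors of $v$ in $G$ and $\operatorname{dist}_G$ the hop distance in $G$. For $\{u,v\}\in E^2\setminus E$ the vertices are at distance exactly $2$, so $N_G(u)\cap N_G(v)\neq\emptyset$. *)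

From mathcomp Require Import all_boot all_order all_algebra.
Set Implicit Arguments. Unset Strict Implicit. Unset Printing Implicit Defensive.
Import Order.TTheory GRing.Theory Num.Theory.

Definition simple_graph (T : finType) (e : rel T) : Prop :=
  symmetric e /\ irreflexive e.

Definition nbhd (T : finType) (e : rel T) (v : T) : {set T} := [set w | e v w].

(* {u,v} in E^2 \ E : distinct, non-adjacent, at distance exactly 2
   (i.e. with a common neighbour). *)
Definition dist2_nonedge (T : finType) (e : rel T) (u v : T) : bool :=
  [&& u != v, ~~ e u v & nbhd e u :&: nbhd e v != set0].

Definition b2q (b : bool) : rat := (b : nat)%:R.

(* If one of [y_u], [y_v], [y_i] is 1 the left-hand side is at most 0 <= x_uv.
   Otherwise the common neighbour i contributes 1 to the average in the
   hypothesis, so that average is positive, hence x_uv > 0 and, x_uv being an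
   integer, x_uv >= 1, which is the left-hand side. *)
From mathcomp Require Import all_boot all_order all_algebra.
From mathcomp Require Import lra.
Import Order.TTheory GRing.Theory Num.Theory.
Local Open Scope ring_scope.

Lemma subr_b2q_ge0 (b : bool) : 0 <= 1 - b2q b.
Proof. by case: b; rewrite /b2q /= ?subrr ?subr0. Qed.

Lemma subr_b2q3_le (a b c : bool) :
  1 - b2q a - b2q b - b2q c <= b2q [&& ~~ a, ~~ b & ~~ c].
Proof. by case: a; case: b; case: c; rewrite /b2q /=; lra. Qed.

Lemma mean_gt0 {R : numFieldType} {T : finType} (A : {set T}) (F : T -> R) i :
  i \in A -> 0 < F i -> (forall j, j \in A -> 0 <= F j) ->
  0 < (\sum_(j in A) F j) / #|A|%:R.
Proof.
move=> Ai Fi_gt0 F_ge0; apply: divr_gt0.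
  by rewrite (bigD1 i) //= ltr_pwDl // sumr_ge0 // => j /andP[/F_ge0].
by rewrite ltr0n; apply/card_gt0P; exists i.
Qed.

Theorem lemma2 (T : finType) (e : rel T) (x : T -> T -> nat) (y : T -> bool) :
  simple_graph e ->
  (forall u v, x u v = x v u) ->
  (forall u v, dist2_nonedge e u v ->
     (\sum_(i in nbhd e u :&: nbhd e v) (1 - b2q (y i)))
       / #|nbhd e u :&: nbhd e v|%:R - b2q (y u) - b2q (y v) <= (x u v)%:R) ->
  forall u v, dist2_nonedge e u v ->
  forall i, i \in nbhd e u :&: nbhd e v ->
    1 - b2q (y u) - b2q (y v) - b2q (y i) <= (x u v)%:R.
Proof.
move=> _ _ avg_le u v uv i Ni; apply: le_trans (subr_b2q3_le _ _ _) _.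
have [/and3P[/negbTE yu /negbTE yv /negbTE yi]|_] := boolP [&& _, _ & _]; last first.
  by rewrite /b2q /= ler0n.
have := avg_le u v uv; rewrite yu yv [b2q false]/b2q !subr0 => mean_le.
rewrite /b2q /= ler1n -(ltr0n rat); apply: lt_le_trans mean_le.
apply: (@mean_gt0 _ _ _ _ i Ni) => [|j _]; last exact: subr_b2q_ge0.
by rewrite yi /b2q subr0.
Qed.
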